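(* Five distinct points $q_1,\dots,q_5\in\widehat{\mathbb H}$ lie on a single 2-sphere or a 2-plane if and only if $Q(q_1,q_2,q_3,q_4)$ and $Q(q_1,q_2,q_3,q_5)$ commute with each other.
   Context: $\mathbb H$ denotes the quaternions (identified with $\mathbb R^4$), $\widehat{\mathbb H}=\mathbb H\cup\{\infty\}$. For four distinct points of $\widehat{\mathbb H}$ the cross-ratio is $Q(q_1,q_2,q_3,q_4)=(q_2-q_1)^{-1}(q_4-q_1)(q_4-q_3)^{-1}(q_2-q_3)\in\mathbb H$, defined by taking limits if some $q_n=\infty$. *)

From HB Require Import structures.
From mathcomp Require Import all_boot all_order all_algebra.
From mathcomp Require Import reals.
Set Implicit Arguments. Unset Strict Implicit. Unset Printing Implicit Defensive.
Import Order.TTheory GRing.Theory Num.Theory.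
Local Open Scope ring_scope.

Section Quat.
Variable R : realType.

(* q = a + b i + c j + d k *)
Record quat := Quat { qa : R; qb : R; qc : R; qd : R }.

Definition qzero : quat := Quat 0 0 0 0.
Definition qone : quat := Quat 1 0 0 0.
Definition qadd (x y : quat) := Quat (qa x + qa y) (qb x + qb y) (qc x + qc y) (qd x + qd y).
Definition qopp (x : quat) := Quat (- qa x) (- qb x) (- qc x) (- qd x).
Definition qsub (x y : quat) := qadd x (qopp y).
Definition qscale (t : R) (x : quat) := Quat (t * qa x) (t * qb x) (t * qc x) (t * qd x).

(* Hamilton product: i^2 = j^2 = k^2 = ijk = -1 *)
Definition qmul (x y : quat) :=
  Quat (qa x * qa y - qb x * qb y - qc x * qc y - qd x * qd y)
       (qa x * qb y + qb x * qa y + qc x * qd y - qd x * qc y)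
       (qa x * qc y - qb x * qd y + qc x * qa y + qd x * qb y)
       (qa x * qd y + qb x * qc y - qc x * qb y + qd x * qa y).

Definition qconj (x : quat) := Quat (qa x) (- qb x) (- qc x) (- qd x).

Definition qdot (x y : quat) := qa x * qa y + qb x * qb y + qc x * qc y + qd x * qd y.
Definition qnorm2 (x : quat) := qdot x x.

Definition qinv (x : quat) := qscale (qnorm2 x)^-1 (qconj x).

(* extended quaternions: None stands for the point infinity *)
Definition hquat := option quat.

(* Cross-ratio Q(q1,q2,q3,q4) = (q2-q1)^-1 (q4-q1) (q4-q3)^-1 (q2-q3),
   with the limiting values when one point is infinity. *)
Definition crossratio (z1 z2 z3 z4 : hquat) : quat :=
  match z1, z2, z3, z4 with
  | Some q1, Some q2, Some q3, Some q4 =>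
      qmul (qmul (qmul (qinv (qsub q2 q1)) (qsub q4 q1)) (qinv (qsub q4 q3))) (qsub q2 q3)
  | None, Some q2, Some q3, Some q4 => qmul (qinv (qsub q4 q3)) (qsub q2 q3)
  | Some q1, None, Some q3, Some q4 => qmul (qsub q4 q1) (qinv (qsub q4 q3))
  | Some q1, Some q2, None, Some q4 => qmul (qinv (qsub q2 q1)) (qsub q4 q1)
  | Some q1, Some q2, Some q3, None => qmul (qinv (qsub q2 q1)) (qsub q2 q3)
  | _, _, _, _ => qzero (* never used: points are distinct *)
  end.

(* The round 2-sphere in R^4 with center c, radius r > 0, lying in the affine
   hyperplane through c orthogonal to n <> 0.  It does not contain infinity. *)
Definition on_2sphere (c : quat) (r : R) (n : quat) (z : hquat) : Prop :=
  match z with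
  | None => False
  | Some x => qnorm2 (qsub x c) = r ^+ 2 /\ qdot (qsub x c) n = 0
  end.

Definition is_2sphere_data (c : quat) (r : R) (n : quat) : Prop :=
  0 < r /\ n <> qzero.

(* The affine 2-plane p + R u + R v (u, v linearly independent), completed
   by the point infinity in H^ . *)
Definition on_2plane (p u v : quat) (z : hquat) : Prop :=
  match z with
  | None => True
  | Some x => exists a b : R, x = qadd p (qadd (qscale a u) (qscale b v))
  end.

Definition lin_indep2 (u v : quat) : Prop :=
  forall a b : R, qadd (qscale a u) (qscale b v) = qzero -> a = 0 /\ b = 0.

Definition all5 (P : hquat -> Prop) (z1 z2 z3 z4 z5 : hquat) : Prop :=
  P z1 /\ P z2 /\ P z3 /\ P z4 /\ P z5.

Definition on_common_2sphere_or_2plane (z1 z2 z3 z4 z5 : hquat) : Prop :=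
  (exists c r n, is_2sphere_data c r n /\ all5 (on_2sphere c r n) z1 z2 z3 z4 z5)
  \/ (exists p u v, lin_indep2 u v /\ all5 (on_2plane p u v) z1 z2 z3 z4 z5).

Definition distinct5 (z1 z2 z3 z4 z5 : hquat) : Prop :=
  [/\ z1 <> z2, z1 <> z3, z1 <> z4, z1 <> z5 &
   [/\ z2 <> z3, z2 <> z4, z2 <> z5 & [/\ z3 <> z4, z3 <> z5 & z4 <> z5]]].

End Quat.

(* Send z3 to infinity by the chart z |-> (z - z3)^-1 (the identity if z3 is
   infinity).  It maps the 2-planes through z3 onto the 2-planes of H through 0,
   and the 2-spheres through z3 onto the affine 2-planes missing 0, so the five
   points lie on a common 2-sphere or 2-plane iff their images w1, w2, w4, w5
   lie in an affine 2-plane, i.e. iff w2 - w1, w4 - w1, w5 - w1 are linearly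
   dependent over R.  On the other hand Q(z1,z2,z3,z) = l (w - w1) r with
   nonzero l, r independent of z and l (w2 - w1) r = 1.  Two quaternions x, y
   commute iff 1, x, y are linearly dependent, and linear dependence is
   preserved by multiplying on either side by a nonzero quaternion; hence
   Q(z1,z2,z3,z4) and Q(z1,z2,z3,z5) commute iff w2 - w1, w4 - w1, w5 - w1 are
   linearly dependent. *)

From mathcomp Require Import all_boot all_order all_algebra.
From mathcomp Require Import reals ring lra.
From Stdlib Require Import Classical.
Set Implicit Arguments. Unset Strict Implicit. Unset Printing Implicit Defensive.
Import Order.TTheory GRing.Theory Num.Theory.
Local Open Scope ring_scope.

Ltac qunfold := rewrite /qinv /qsub /qnorm2 /qdot /qmul /qscale /qconj /qone /qzero /qadd /qopp /=.

Ltac qcoords := repeat match goal with x : quat _ |- _ => destruct x end; qunfold.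

Ltac qring := qcoords; first [congr Quat; ring | ring].

Section Quaternions.
Variable R : realType.
Implicit Types x y z u v w p c M N : quat R.
Local Notation q0 := (qzero R).
Local Notation q1 := (qone R).

Lemma qmulA x y z : qmul x (qmul y z) = qmul (qmul x y) z.
Proof. qring. Qed.

Lemma qmul1q x : qmul q1 x = x.
Proof. qring. Qed.

Lemma qmulq1 x : qmul x q1 = x.
Proof. qring. Qed.

Lemma qmul0q x : qmul q0 x = q0.
Proof. qring. Qed.

Lemma qaddC x y : qadd x y = qadd y x.
Proof. qring. Qed.

Lemma qsubq0 x : qsub x q0 = x.
Proof. qring. Qed.

Lemma qsub_eq0 x y : qsub x y = q0 -> x = y.
Proof. by qcoords => -[*]; congr Quat; lra. Qed.

Lemma qsub_neq0 x y : x <> y -> qsub x y <> q0.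
Proof. by move=> xy /qsub_eq0. Qed.

Lemma qnorm2_ge0 x : 0 <= qnorm2 x.
Proof. qcoords; nra. Qed.

Lemma qnorm2_eq0 x : qnorm2 x = 0 -> x = q0.
Proof. by case: x => a b c d; qunfold => N; congr Quat; nra. Qed.

Lemma qnorm2_neq0 x : x <> q0 -> qnorm2 x != 0.
Proof. by move=> x0; apply/eqP => /qnorm2_eq0. Qed.

Lemma qmulVq x : x <> q0 -> qmul (qinv x) x = q1.
Proof. move/qnorm2_neq0; qcoords => N; by congr Quat; field. Qed.

Lemma qmulqV x : x <> q0 -> qmul x (qinv x) = q1.
Proof. move/qnorm2_neq0; qcoords => N; by congr Quat; field. Qed.

Lemma qinv_neq0 x : x <> q0 -> qinv x <> q0.
Proof.
move=> x0 ix0; have := qmulVq x0; rewrite ix0 qmul0q => -[].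
by apply/eqP; rewrite eq_sym oner_eq0.
Qed.

Lemma qinvK x : x <> q0 -> qinv (qinv x) = x.
Proof.
move=> x0; have ix0 := qinv_neq0 x0.
by rewrite -[RHS]qmul1q -(qmulVq ix0) -qmulA qmulVq // qmulq1.
Qed.

Lemma qnorm2_qinv x : x <> q0 -> qnorm2 (qinv x) = (qnorm2 x)^-1.
Proof. by move/qnorm2_neq0; qcoords => x0; field. Qed.

Lemma qconj_neq0 x : x <> q0 -> qconj x <> q0.
Proof. by move=> x0 E; apply: x0; move: E; qcoords => -[*]; congr Quat; lra. Qed.

Lemma qdot_subl x y w : qdot (qsub x y) w = qdot x w - qdot y w.
Proof. qring. Qed.

Lemma qdot_scalel t x y : qdot (qscale t x) y = t * qdot x y.
Proof. qring. Qed.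

Lemma qdot_scaler t x y : qdot x (qscale t y) = t * qdot x y.
Proof. qring. Qed.

Lemma qdot_qinv_conj x y : qdot (qinv x) (qconj y) = (qnorm2 x)^-1 * qdot x y.
Proof. qring. Qed.

(** * Linear dependence and commutation *)

Definition lincomb3 (l1 : R) x (l2 : R) y (l3 : R) z :=
  qadd (qscale l1 x) (qadd (qscale l2 y) (qscale l3 z)).

Definition dependent3 x y z := exists l1 l2 l3 : R,
  ~ [/\ l1 = 0, l2 = 0 & l3 = 0] /\ lincomb3 l1 x l2 y l3 z = q0.

Lemma dependent3_map (f : quat R -> quat R) x y z :
  (forall l1 l2 l3 x y z, f (lincomb3 l1 x l2 y l3 z) = lincomb3 l1 (f x) l2 (f y) l3 (f z)) ->
  f q0 = q0 -> dependent3 x y z -> dependent3 (f x) (f y) (f z).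
Proof.
move=> f_lin f0 [l1 [l2 [l3 [nz E]]]]; exists l1, l2, l3; split=> //.
by rewrite -f_lin E.
Qed.

Lemma dependent3_mulL p x y z : p <> q0 ->
  dependent3 (qmul p x) (qmul p y) (qmul p z) <-> dependent3 x y z.
Proof.
have mulL q a b c : dependent3 a b c -> dependent3 (qmul q a) (qmul q b) (qmul q c).
  by apply: dependent3_map => *; rewrite /lincomb3; qring.
move=> p0; split=> [/(mulL (qinv p))|]; last exact: mulL.
by rewrite !qmulA qmulVq // !qmul1q.
Qed.

Lemma dependent3_mulR p x y z : p <> q0 ->
  dependent3 (qmul x p) (qmul y p) (qmul z p) <-> dependent3 x y z.
Proof.
have mulR q a b c : dependent3 a b c -> dependent3 (qmul a q) (qmul b q) (qmul c q).
  by apply: (@dependent3_map (fun t => qmul t q)) => *; rewrite /lincomb3; qring.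
move=> p0; split=> [/(mulR (qinv p))|]; last exact: mulR.
by rewrite -!qmulA qmulqV // !qmulq1.
Qed.

Lemma det2_eq0 (l1 l2 s t u v : R) : ~ (l1 = 0 /\ l2 = 0) ->
  l1 * s + l2 * t = 0 -> l1 * u + l2 * v = 0 -> s * v = u * t.
Proof.
move=> nz Es Eu; apply/eqP; rewrite -subr_eq0; apply/eqP.
have E1 : l1 * (s * v - u * t) = v * (l1 * s + l2 * t) - t * (l1 * u + l2 * v) by ring.
have E2 : l2 * (s * v - u * t) = s * (l1 * u + l2 * v) - u * (l1 * s + l2 * t) by ring.
rewrite Es Eu !mulr0 subrr in E1 E2.
have [l10|l10] := eqVneq l1 0; last by apply: (mulfI l10); rewrite E1 mulr0.
have l20 : l2 != 0 by apply/eqP => l20; apply: nz.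
by apply: (mulfI l20); rewrite E2 mulr0.
Qed.

(* [x] and [y] commute iff their imaginary parts are parallel. *)
Lemma qcommute_dependent3 x y : qmul x y = qmul y x <-> dependent3 q1 x y.
Proof.
case: x y => a b c d [e f g h]; split.
- qunfold => -[_ Cb Cc Cd].
  have dep (s t : R) : t != 0 -> s * b = t * f -> s * c = t * g -> s * d = t * h ->
      dependent3 q1 (Quat a b c d) (Quat e f g h).
    move=> t0 Eb Ec Ed; exists (t * e - s * a), s, (- t); split.
      by case=> _ _ /eqP; rewrite oppr_eq0 (negbTE t0).
    by rewrite /lincomb3; qunfold; congr Quat; lra.
  have [b0|b0] := eqVneq b 0; last by apply: (dep f b); lra.
  have [c0|c0] := eqVneq c 0; last by apply: (dep g c); subst b; lra.
  have [d0|d0] := eqVneq d 0; last by apply: (dep h d); subst b c; lra.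
  exists (- a), 1, 0; split; first by case=> _ /eqP; rewrite oner_eq0.
  by rewrite /lincomb3 b0 c0 d0; qunfold; congr Quat; ring.
- case=> l0 [l1 [l2 [nz]]]; rewrite /lincomb3; qunfold => -[E0].
  rewrite !mulr0 !add0r => Eb Ec Ed.
  have nz12 : ~ (l1 = 0 /\ l2 = 0).
    by case=> l10 l20; apply: nz; split=> //; move: E0; rewrite l10 l20; lra.
  have := det2_eq0 nz12 Ec Ed; have := det2_eq0 nz12 Ed Eb; have := det2_eq0 nz12 Eb Ec.
  by move=> *; congr Quat; lra.
Qed.

Definition in_span2 u v x := exists a b : R, x = qadd (qscale a u) (qscale b v).

Lemma in_span2_0 u v : in_span2 u v q0.
Proof. by exists 0, 0; qring. Qed.

Lemma in_span2_l u v : in_span2 u v u.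
Proof. by exists 1, 0; qring. Qed.

Lemma in_span2_r u v : in_span2 u v v.
Proof. by exists 0, 1; qring. Qed.

Lemma in_span2_scale u v t x : in_span2 u v x -> in_span2 u v (qscale t x).
Proof. by case=> a [b ->]; exists (t * a), (t * b); qring. Qed.

Lemma in_span2_add u v x y : in_span2 u v x -> in_span2 u v y -> in_span2 u v (qadd x y).
Proof. by case=> a [b ->] [c [d ->]]; exists (a + c), (b + d); qring. Qed.

Lemma in_span2_sub u v x y : in_span2 u v x -> in_span2 u v y -> in_span2 u v (qsub x y).
Proof. by case=> a [b ->] [c [d ->]]; exists (a - c), (b - d); qring. Qed.

Lemma in_span2_qinv u v x : in_span2 u v x -> in_span2 (qconj u) (qconj v) (qinv x).
Proof.
case=> a [b ->]; rewrite {1}/qinv; move: (qnorm2 _)^-1 => t.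
by exists (t * a), (t * b); qring.
Qed.

Lemma lin_indep2_conj u v : lin_indep2 u v -> lin_indep2 (qconj u) (qconj v).
Proof. by move=> uv a b E; apply: uv; move: E; qcoords => -[*]; congr Quat; lra. Qed.

Lemma qscale_solve a b x y : b != 0 -> qadd (qscale a x) (qscale b y) = q0 ->
  y = qscale (- a / b) x.
Proof.
move=> b0 E.
have -> : qscale (- a / b) x = qadd (qscale (- b^-1) (qadd (qscale a x) (qscale b y))) y.
  by qcoords; congr Quat; field.
by rewrite E; qring.
Qed.

Lemma lincomb3_solve l1 l2 l3 x y z : l3 != 0 -> lincomb3 l1 x l2 y l3 z = q0 ->
  z = qadd (qscale (- l1 / l3) x) (qscale (- l2 / l3) y).
Proof.
move=> l30 E.
have -> : qadd (qscale (- l1 / l3) x) (qscale (- l2 / l3) y) =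
          qadd (qscale (- l3^-1) (lincomb3 l1 x l2 y l3 z)) z.
  by rewrite /lincomb3; qcoords; congr Quat; field.
by rewrite E; qring.
Qed.

Lemma exists_span2_1 x : exists u v, lin_indep2 u v /\ in_span2 u v x.
Proof.
case: x => a b c d; have [[-> ->]|cd] := classic (c = 0 /\ d = 0).
  exists (Quat 1 0 0 0), (Quat 0 1 0 0); split; last by exists a, b; qring.
  by move=> s t; qunfold => -[]; lra.
exists (Quat a b c d), q1; split; last exact: in_span2_l.
move=> s t; qunfold => -[Ea _ Ec Ed].
have s0 : s = 0.
  by have [//|s0] := eqVneq s 0; case: cd; split; apply: (mulfI s0); lra.
by split=> //; move: Ea; rewrite s0; lra.
Qed.

Lemma exists_span2_2 x y : exists u v, lin_indep2 u v /\ in_span2 u v x /\ in_span2 u v y.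
Proof.
have [xy|] := classic (lin_indep2 x y).
  by exists x, y; split; [|split; [exact: in_span2_l | exact: in_span2_r]].
move=> dep; have [a [b [E ab]]] : exists a b, qadd (qscale a x) (qscale b y) = q0 /\ ~ (a = 0 /\ b = 0).
  apply: NNPP => nex; apply: dep => a b E; apply: NNPP => ab; apply: nex; by exists a, b.
have [b0|b0] := eqVneq b 0.
  have a0 : a != 0 by apply/eqP => a0; apply: ab.
  have [u [v [uv yuv]]] := exists_span2_1 y; exists u, v; split=> //; split=> //.
  by rewrite qaddC in E; rewrite (qscale_solve a0 E); exact: in_span2_scale.
have [u [v [uv xuv]]] := exists_span2_1 x; exists u, v; split=> //; split=> //.
by rewrite (qscale_solve b0 E); exact: in_span2_scale.
Qed.

Lemma dependent3_span2 x y z : dependent3 x y z ->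
  exists u v, lin_indep2 u v /\ [/\ in_span2 u v x, in_span2 u v y & in_span2 u v z].
Proof.
case=> l1 [l2 [l3 [nz E]]].
wlog l30 : l1 l2 l3 x y z nz E / l3 != 0 => [gen|].
  have [l30|] := eqVneq l3 0; last exact: gen nz E.
  have [l20|l20] := eqVneq l2 0.
    have l10 : l1 != 0 by apply/eqP => l10; apply: nz.
    have E' : lincomb3 l2 y l3 z l1 x = q0 by rewrite -E /lincomb3; qring.
    have [u [v [uv [Hy Hz Hx]]]] := gen _ _ _ _ _ _ (fun '(And3 a b c) => nz (And3 c a b)) E' l10.
    by exists u, v.
  have E' : lincomb3 l1 x l3 z l2 y = q0 by rewrite -E /lincomb3; qring.
  have [u [v [uv [Hx Hz Hy]]]] := gen _ _ _ _ _ _ (fun '(And3 a b c) => nz (And3 a c b)) E' l20.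
  by exists u, v.
have [u [v [uv [Hx Hy]]]] := exists_span2_2 x y.
exists u, v; split=> //; split=> //.
by rewrite (lincomb3_solve l30 E); apply: in_span2_add; apply: in_span2_scale.
Qed.

Definition qcoord x (j : nat) : R :=
  match j with 0 => qa x | 1 => qb x | 2 => qc x | _ => qd x end.

Definition qrows3 x y z : 'M[R]_(3, 4) :=
  \matrix_(i < 3, j < 4) qcoord (nth q0 [:: x; y; z] i) j.

Lemma kernel_vector m n (A : 'M[R]_(m, n)) :
  ~~ row_free A -> exists2 v : 'rV_m, v != 0 & v *m A = 0.
Proof. rewrite -kermx_eq0 => /rowV0Pn [v Hv v0]; exists v => //; exact/sub_kermxP. Qed.

Lemma rV3_neq0 (v : 'rV[R]_3) : v != 0 ->
  ~ [/\ v 0 ord0 = 0, v 0 (lift ord0 ord0) = 0 & v 0 (lift ord0 (lift ord0 ord0)) = 0].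
Proof.
move=> /eqP v0 [v1 v2 v3]; apply: v0; apply/rowP => -[[|[|[|i]]] Hi] //; rewrite mxE;
  [rewrite -v1 | rewrite -v2 | rewrite -v3]; congr (v 0 _); exact: val_inj.
Qed.

Lemma qrows3_dependent3 x y z : ~~ row_free (qrows3 x y z) -> dependent3 x y z.
Proof.
move=> /kernel_vector [v /rV3_neq0 v0 /matrixP vA].
exists (v 0 ord0), (v 0 (lift ord0 ord0)), (v 0 (lift ord0 (lift ord0 ord0))); split=> //.
have := vA 0 ord0; have := vA 0 (lift ord0 ord0); have := vA 0 (lift ord0 (lift ord0 ord0)).
have := vA 0 (lift ord0 (lift ord0 (lift ord0 ord0))).
rewrite !mxE !big_ord_recl !big_ord0 !mxE /= /lincomb3; qcoords => *.
by congr Quat; lra.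
Qed.

Lemma orthogonal2_dependent3 M N x y z : lin_indep2 M N ->
  [/\ qdot x M = 0, qdot y M = 0 & qdot z M = 0] ->
  [/\ qdot x N = 0, qdot y N = 0 & qdot z N = 0] -> dependent3 x y z.
Proof.
move=> MN [xM yM zM] [xN yN zN].
pose B : 'M[R]_(4, 2) := \matrix_(i < 4, j < 2) qcoord (if val j == 0%N then M else N) i.
have AB : qrows3 x y z *m B = 0.
  apply/matrixP => i j; rewrite !mxE !big_ord_recl !big_ord0 !mxE /=.
  by case: i j => [[|[|[|i]]] Hi] [[|[|j]] Hj] //=; move: xM yM zM xN yN zN; rewrite /qdot; lra.
have rB : \rank B = 2%N.
  rewrite -mxrank_tr; apply/eqP; apply: contraT => /kernel_vector [w w0 /matrixP wB].
  have := wB 0 ord0; have := wB 0 (lift ord0 ord0); have := wB 0 (lift ord0 (lift ord0 ord0)).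
  have := wB 0 (lift ord0 (lift ord0 (lift ord0 ord0))).
  rewrite !mxE !big_ord_recl !big_ord0 !mxE /= => E3 E2 E1 E0.
  have [w1 w2] : w 0 ord0 = 0 /\ w 0 (lift ord0 ord0) = 0.
    by apply: MN; move: E0 E1 E2 E3; qcoords => *; congr Quat; lra.
  rewrite -(negbTE w0); apply/eqP/rowP => -[[|[|i]] Hi] //; rewrite mxE;
    [rewrite -w1 | rewrite -w2]; congr (w 0 _); exact: val_inj.
apply: qrows3_dependent3; apply/negP => /eqP rA.
by have := mulmx0_rank_max AB; rewrite rA rB.
Qed.

Lemma exists_orthogonal x y z :
  exists N, N <> q0 /\ [/\ qdot x N = 0, qdot y N = 0 & qdot z N = 0].
Proof.
have : ~~ row_free (qrows3 x y z)^T.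
  by apply/negP => /eqP rA; have := rank_leq_col (qrows3 x y z)^T; rewrite rA.
move=> /kernel_vector [w w0 /matrixP wA].
exists (Quat (w 0 ord0) (w 0 (lift ord0 ord0)) (w 0 (lift ord0 (lift ord0 ord0)))
    (w 0 (lift ord0 (lift ord0 (lift ord0 ord0))))); split.
  move=> -[w1 w2 w3 w4]; move/eqP: w0; apply; apply/rowP => -[[|[|[|[|i]]]] Hi] //;
    rewrite mxE; [rewrite -w1 | rewrite -w2 | rewrite -w3 | rewrite -w4];
    congr (w 0 _); exact: val_inj.
have := wA 0 ord0; have := wA 0 (lift ord0 ord0); have := wA 0 (lift ord0 (lift ord0 ord0)).
rewrite !mxE !big_ord_recl !big_ord0 !mxE /= /qdot /= => *.
by split; lra.
Qed.

Lemma orthogonal_lin_indep2 M N : M <> q0 -> N <> q0 -> qdot M N = 0 -> lin_indep2 M N.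
Proof.
move=> /qnorm2_neq0 M0 /qnorm2_neq0 N0 MN a b E.
have EM : qdot (qadd (qscale a M) (qscale b N)) M = a * qnorm2 M + b * qdot M N by qring.
have EN : qdot (qadd (qscale a M) (qscale b N)) N = a * qdot M N + b * qnorm2 N by qring.
have q0w w : qdot q0 w = 0 by qring.
rewrite E q0w MN mulr0 addr0 in EM; rewrite E q0w MN mulr0 add0r in EN.
by split; [apply: (mulIf M0); rewrite -EM | apply: (mulIf N0); rewrite -EN]; rewrite mul0r.
Qed.

Lemma in_span2_orthogonal u v x N :
  in_span2 u v x -> qdot u N = 0 -> qdot v N = 0 -> qdot x N = 0.
Proof.
case=> a [b ->] uN vN.
have -> : qdot (qadd (qscale a u) (qscale b v)) N = a * qdot u N + b * qdot v N by qring.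
by rewrite uN vN; ring.
Qed.

Lemma in_span2_dependent3 u v x y z :
  in_span2 u v x -> in_span2 u v y -> in_span2 u v z -> dependent3 x y z.
Proof.
move=> x_uv y_uv z_uv.
have [N1 [N10 [uN1 vN1 _]]] := exists_orthogonal u v u.
have [N2 [N20 [uN2 vN2 N12]]] := exists_orthogonal u v N1.
by apply: (orthogonal2_dependent3 (orthogonal_lin_indep2 N10 N20 N12)); split;
  apply: (@in_span2_orthogonal u v).
Qed.

Lemma gram_neq0 u v : lin_indep2 u v -> qnorm2 u * qnorm2 v - qdot u v ^+ 2 != 0.
Proof.
move=> uv; apply/eqP => G.
have u0 : u <> q0.
  by move=> u0; have [/eqP] := uv 1 0 (ltac:(rewrite u0; qring)); rewrite oner_eq0.
have E : qnorm2 (qadd (qscale (- qdot u v) u) (qscale (qnorm2 u) v)) =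
         qnorm2 u * (qnorm2 u * qnorm2 v - qdot u v ^+ 2) by qring.
rewrite G mulr0 in E.
by have [_ /eqP] := uv _ _ (qnorm2_eq0 E); rewrite (negbTE (qnorm2_neq0 u0)).
Qed.

Lemma gram_schmidt u v p : lin_indep2 u v -> ~ in_span2 u v p ->
  exists p0, [/\ p0 <> q0, qdot u p0 = 0, qdot v p0 = 0 & in_span2 u v (qsub p p0)].
Proof.
move=> uv p_uv; have := gram_neq0 uv.
set g := _ - _ => g0.
pose a := (qnorm2 v * qdot p u - qdot u v * qdot p v) / g.
pose b := (qnorm2 u * qdot p v - qdot u v * qdot p u) / g.
exists (qsub p (qadd (qscale a u) (qscale b v))); split.
- by move/qsub_eq0 => E; apply: p_uv; exists a, b.
- by rewrite /a /b /g in g0 *; qcoords; field.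
- by rewrite /a /b /g in g0 *; qcoords; field.
- by exists a, b; qring.
Qed.

Lemma on_2planeE p u v x : on_2plane p u v (Some x) <-> in_span2 u v (qsub x p).
Proof.
split=> -[a [b E]]; exists a, b; last by rewrite -E; qring.
by rewrite E; qring.
Qed.

Definition affine_plane4 y1 y2 y3 y4 := exists p u v, lin_indep2 u v /\
  [/\ on_2plane p u v (Some y1), on_2plane p u v (Some y2),
      on_2plane p u v (Some y3) & on_2plane p u v (Some y4)].

Lemma affine_plane4_dependent3 y1 y2 y3 y4 :
  affine_plane4 y1 y2 y3 y4 <-> dependent3 (qsub y2 y1) (qsub y3 y1) (qsub y4 y1).
Proof.
split.
- case=> p [u [v [uv [/on_2planeE H1 /on_2planeE H2 /on_2planeE H3 /on_2planeE H4]]]].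
  have sub1 y : in_span2 u v (qsub y p) -> in_span2 u v (qsub y y1).
    by move=> Hy; rewrite (_ : qsub y y1 = qsub (qsub y p) (qsub y1 p)); [exact: in_span2_sub | qring].
  by apply: (@in_span2_dependent3 u v); apply: sub1.
- move=> /dependent3_span2 [u [v [uv [H2 H3 H4]]]]; exists y1, u, v; split=> //.
  split; apply/on_2planeE => //.
  by rewrite (_ : qsub y1 y1 = q0); [exact: in_span2_0 | qring].
Qed.

(** * The chart sending [z3] to infinity *)

Lemma Some_neq x y : Some x <> Some y -> x <> y.
Proof. by move=> xy E; apply: xy; rewrite E. Qed.

Definition chart (z3 z : hquat R) : quat R :=
  match z3, z with
  | Some c, Some x => qinv (qsub x c)
  | None, Some x => x
  | _, None => q0
  end.

(* The image under [chart (Some c)] of the 2-sphere through [c] with centre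
   [c + conj M] and normal [conj N]. *)
Definition on_chart_sphere M N y := qdot y M = 1 / 2 /\ qdot y N = 0.

Lemma chart_sphere_affine_plane4 M N y1 y2 y3 y4 : lin_indep2 M N ->
  on_chart_sphere M N y1 -> on_chart_sphere M N y2 ->
  on_chart_sphere M N y3 -> on_chart_sphere M N y4 -> affine_plane4 y1 y2 y3 y4.
Proof.
move=> MN [M1 N1] [M2 N2] [M3 N3] [M4 N4]; apply/affine_plane4_dependent3.
by apply: (orthogonal2_dependent3 MN); split; rewrite qdot_subl ?M1 ?M2 ?M3 ?M4 ?N1 ?N2 ?N3 ?N4 subrr.
Qed.

Lemma affine_plane_chart_sphere p u v : lin_indep2 u v -> ~ in_span2 u v p ->
  exists M N, [/\ M <> q0, N <> q0, qdot M N = 0 &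
    forall y, on_2plane p u v (Some y) -> on_chart_sphere M N y].
Proof.
move=> uv p_uv; have [p0 [p00 up0 vp0 pp0]] := gram_schmidt uv p_uv.
have [N [N0 [uN vN p0N]]] := exists_orthogonal u v p0.
have n0 := qnorm2_neq0 p00.
pose k := 1 / (2 * qnorm2 p0).
have MN : qdot (qscale k p0) N = 0 by rewrite qdot_scalel p0N mulr0.
have onM y : on_2plane p u v (Some y) -> on_chart_sphere (qscale k p0) N y.
  move=> /on_2planeE yp; have yp0 : in_span2 u v (qsub y p0).
    have -> : qsub y p0 = qadd (qsub y p) (qsub p p0) by qring.
    exact: in_span2_add.
  split.
    have Ey : qdot y p0 = qdot (qsub y p0) p0 + qnorm2 p0 by qring.
    by rewrite qdot_scaler Ey (in_span2_orthogonal yp0 up0 vp0) add0r /k; field.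
  have -> : qdot y N = qdot (qsub y p0) N + qdot p0 N by qring.
  by rewrite (in_span2_orthogonal yp0 uN vN) p0N addr0.
exists (qscale k p0), N; split=> // M0.
have [p0M _] : on_chart_sphere (qscale k p0) N p0.
  apply/onM/on_2planeE.
  have -> : qsub p0 p = qscale (-1) (qsub p p0) by qring.
  exact: in_span2_scale.
by move: p0M; rewrite M0 (_ : qdot p0 q0 = 0); [lra | qring].
Qed.

Lemma on_2sphere_chart c0 r n c (z : hquat R) :
  on_2sphere c0 r n (Some c) -> on_2sphere c0 r n z -> z <> Some c ->
  on_chart_sphere (qconj (qsub c0 c)) (qconj n) (chart (Some c) z).
Proof.
case=> c_r c_n; case: z => [x|] //= [x_r x_n] xc.
have /qnorm2_neq0 w0 : qsub x c <> q0 by apply/qsub_neq0/Some_neq.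
rewrite /on_chart_sphere !qdot_qinv_conj; split.
  have -> : qdot (qsub x c) (qsub c0 c) =
            (qnorm2 (qsub x c) + qnorm2 (qsub c c0) - qnorm2 (qsub x c0)) / 2.
    by qcoords; field.
  by rewrite c_r x_r addrK; field.
have -> : qdot (qsub x c) n = qdot (qsub x c0) n - qdot (qsub c c0) n by qring.
by rewrite x_n c_n subrr mulr0.
Qed.

Lemma qinv_chart_sphere M N y : y <> q0 -> qdot M N = 0 -> on_chart_sphere M N y ->
  qnorm2 (qsub (qinv y) (qconj M)) = qnorm2 M /\ qdot (qsub (qinv y) (qconj M)) (qconj N) = 0.
Proof.
move=> y0 MN [yM yN]; have n0 := qnorm2_neq0 y0; split.
  have -> : qnorm2 (qsub (qinv y) (qconj M)) =
            qnorm2 (qinv y) - 2 * qdot (qinv y) (qconj M) + qnorm2 M by qring.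
  by rewrite qnorm2_qinv // qdot_qinv_conj yM; field.
have -> : qdot (qsub (qinv y) (qconj M)) (qconj N) = qdot (qinv y) (qconj N) - qdot M N by qring.
by rewrite qdot_qinv_conj yN MN mulr0 subrr.
Qed.

Lemma chart_on_2sphere M N c (z : hquat R) : qdot M N = 0 -> z <> Some c ->
  on_chart_sphere M N (chart (Some c) z) ->
  on_2sphere (qadd c (qconj M)) (Num.sqrt (qnorm2 M)) (qconj N) z.
Proof.
move=> MN; case: z => [x|] /= xc; last by case; rewrite (_ : qdot q0 M = 0); [lra | qring].
have w0 : qsub x c <> q0 by apply/qsub_neq0/Some_neq.
move=> /(qinv_chart_sphere (qinv_neq0 w0) MN); rewrite qinvK // sqr_sqrtr ?qnorm2_ge0 //.
by rewrite (_ : qsub x (qadd c (qconj M)) = qsub (qsub x c) (qconj M)) //; qring.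
Qed.

Lemma center_on_2sphere M N c : qdot M N = 0 ->
  on_2sphere (qadd c (qconj M)) (Num.sqrt (qnorm2 M)) (qconj N) (Some c).
Proof.
move=> MN /=; rewrite sqr_sqrtr ?qnorm2_ge0 //; split; first by qring.
have -> : qdot (qsub c (qadd c (qconj M))) (qconj N) = - qdot M N by qring.
by rewrite MN oppr0.
Qed.

Lemma on_2plane_chart p u v c (z : hquat R) : on_2plane p u v (Some c) -> on_2plane p u v z ->
  in_span2 (qconj u) (qconj v) (chart (Some c) z).
Proof.
case: z => [x|] /=; last by move=> _ _; exact: in_span2_0.
move=> /on_2planeE cp /on_2planeE xp; apply: in_span2_qinv.
have -> : qsub x c = qsub (qsub x p) (qsub c p) by qring.
exact: in_span2_sub.
Qed.

Lemma chart_in_span2 u v c (z : hquat R) : z <> Some c -> in_span2 u v (chart (Some c) z) ->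
  on_2plane c (qconj u) (qconj v) z.
Proof.
case: z => [x|] //= xc /in_span2_qinv; rewrite qinvK; first by move/on_2planeE.
exact/qsub_neq0/Some_neq.
Qed.

Lemma all5I (P : hquat R -> Prop) (z1 z2 z3 z4 z5 : hquat R) :
  P z1 -> P z2 -> P z3 -> P z4 -> P z5 -> all5 P z1 z2 z3 z4 z5.
Proof. by rewrite /all5. Qed.

Lemma on_2sphere_or_2plane_chart_finite c (z1 z2 z4 z5 : hquat R) :
  z1 <> Some c -> z2 <> Some c -> z4 <> Some c -> z5 <> Some c ->
  on_common_2sphere_or_2plane z1 z2 (Some c) z4 z5 <->
  affine_plane4 (chart (Some c) z1) (chart (Some c) z2) (chart (Some c) z4) (chart (Some c) z5).
Proof.
move=> c1 c2 c4 c5; split.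
- case=> [[c0 [r [n [[r0 n0] [S1 [S2 [Sc [S4 S5]]]]]]]] | [p [u [v [uv [P1 [P2 [Pc [P4 P5]]]]]]]]].
  + have MN : qdot (qconj (qsub c0 c)) (qconj n) = 0.
      have -> : qdot (qconj (qsub c0 c)) (qconj n) = - qdot (qsub c c0) n by qring.
      by case: Sc => _ ->; rewrite oppr0.
    have M0 : qconj (qsub c0 c) <> q0.
      apply/qconj_neq0/qsub_neq0 => c0c; case: Sc => + _; rewrite c0c.
      by rewrite (_ : qnorm2 (qsub c c) = 0) => [/eqP|]; [rewrite eq_sym sqrf_eq0 gt_eqF | qring].
    apply: (chart_sphere_affine_plane4 (orthogonal_lin_indep2 M0 (qconj_neq0 n0) MN));
      by apply: (on_2sphere_chart Sc).
  + exists q0, (qconj u), (qconj v); split; first exact: lin_indep2_conj.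
    by split; apply/on_2planeE; rewrite qsubq0; exact: on_2plane_chart Pc _.
- case=> p [u [v [uv [P1 P2 P4 P5]]]].
  have [p_uv|p_uv] := classic (in_span2 u v p).
  + right; exists c, (qconj u), (qconj v); split; first exact: lin_indep2_conj.
    have span y : on_2plane p u v (Some y) -> in_span2 u v y.
      move=> /on_2planeE yp; have -> : y = qadd (qsub y p) p by qring.
      exact: in_span2_add.
    apply: all5I; try by apply: chart_in_span2 => //; apply: span.
    by exists 0, 0; qring.
  + left; have [M [N [M0 N0 MN onMN]]] := affine_plane_chart_sphere uv p_uv.
    exists (qadd c (qconj M)), (Num.sqrt (qnorm2 M)), (qconj N); split.
      by split; [rewrite sqrtr_gt0 lt_def qnorm2_ge0 qnorm2_neq0 | exact: qconj_neq0].
    apply: all5I; try by apply: chart_on_2sphere => //; apply: onMN.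
    exact: center_on_2sphere.
Qed.

Lemma on_2sphere_or_2plane_infinite x1 x2 x4 x5 :
  on_common_2sphere_or_2plane (Some x1) (Some x2) None (Some x4) (Some x5) <->
  affine_plane4 x1 x2 x4 x5.
Proof.
split.
- by case=> [[? [? [? [_ [_ [_ [[] _]]]]]]] | [p [u [v [uv [P1 [P2 [_ [P4 P5]]]]]]]]]; exists p, u, v.
- by case=> p [u [v [uv [P1 P2 P4 P5]]]]; right; exists p, u, v; split=> //; exact: all5I.
Qed.

Lemma on_2sphere_or_2plane_chart (z1 z2 z3 z4 z5 : hquat R) :
  z1 <> z3 -> z2 <> z3 -> z4 <> z3 -> z5 <> z3 ->
  on_common_2sphere_or_2plane z1 z2 z3 z4 z5 <->
  affine_plane4 (chart z3 z1) (chart z3 z2) (chart z3 z4) (chart z3 z5).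
Proof.
case: z3 => [c|]; first exact: on_2sphere_or_2plane_chart_finite.
by case: z1 z2 z4 z5 => [x1|] [x2|] [x4|] [x5|] // *; exact: on_2sphere_or_2plane_infinite.
Qed.

(** * Cross-ratios *)

Lemma qsub_inv_resolvent c x1 x : x1 <> c -> x <> c ->
  qmul (qsub c x1) (qsub (qinv (qsub x c)) (qinv (qsub x1 c))) = qmul (qsub x x1) (qinv (qsub x c)).
Proof.
move=> /qsub_neq0/qnorm2_neq0 N1 /qsub_neq0/qnorm2_neq0 N.
by move: N1 N; qcoords => N1 N; congr Quat; field; rewrite N N1.
Qed.

Lemma qsub_inv_resolvent_infty c x1 : x1 <> c ->
  qmul (qsub c x1) (qsub q0 (qinv (qsub x1 c))) = q1.
Proof. by move=> /qsub_neq0/qnorm2_neq0; qcoords => N1; congr Quat; field. Qed.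

Lemma qmul_eq1_neq0 l w r : qmul (qmul l w) r = q1 -> l <> q0 /\ r <> q0.
Proof. by move=> E; split=> E0; move: E; rewrite E0; qcoords => -[]; lra. Qed.

Lemma crossratio_factor (z1 z2 z3 : hquat R) : z1 <> z2 -> z1 <> z3 -> z2 <> z3 ->
  exists l r, qmul (qmul l (qsub (chart z3 z2) (chart z3 z1))) r = q1 /\
    forall z : hquat R, z <> z2 -> z <> z3 ->
      crossratio z1 z2 z3 z = qmul (qmul l (qsub (chart z3 z) (chart z3 z1))) r.
Proof.
case: z3 => [c|]; last first.
  case: z1 z2 => [x1|] [x2|] // /Some_neq x12 _ _.
  have x21 : qsub x2 x1 <> q0 by apply/qsub_neq0/nesym.
  exists (qinv (qsub x2 x1)), q1; split; first by rewrite /= qmulq1 qmulVq.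
  by case=> [x|] // _ _; rewrite /= qmulq1.
case: z1 => [x1|]; last first.
  case: z2 => [x2|] // _ _ /Some_neq x2c.
  exists q1, (qsub x2 c); split; first by rewrite /= qsubq0 qmul1q qmulVq //; exact: qsub_neq0.
  by case=> [x|] _ _ /=; [rewrite qsubq0 qmul1q | qring].
move=> + /Some_neq x1c; case: z2 => [x2|] => [/Some_neq x12 /Some_neq x2c | _ _].
- have x21 : qsub x2 x1 <> q0 by apply/qsub_neq0/nesym.
  exists (qmul (qinv (qsub x2 x1)) (qsub c x1)), (qsub x2 c); split.
    rewrite /= -(qmulA (qinv _) (qsub c x1)) qsub_inv_resolvent // qmulA qmulVq //.
    by rewrite qmul1q qmulVq //; exact: qsub_neq0.
  case=> [x|] _ xc; rewrite /= -(qmulA (qinv _) (qsub c x1)).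
    by rewrite qsub_inv_resolvent ?qmulA //; exact: Some_neq.
  by rewrite qsub_inv_resolvent_infty // qmulq1.
- exists (qsub c x1), q1; split; first by rewrite /= qmulq1 qsub_inv_resolvent_infty.
  by case=> [x|] // _ /Some_neq xc; rewrite /= qmulq1 qsub_inv_resolvent.
Qed.

Lemma crossratio_commute_dependent3 (z1 z2 z3 z4 z5 : hquat R) :
  z1 <> z2 -> z1 <> z3 -> z2 <> z3 -> z4 <> z2 -> z4 <> z3 -> z5 <> z2 -> z5 <> z3 ->
  qmul (crossratio z1 z2 z3 z4) (crossratio z1 z2 z3 z5) =
    qmul (crossratio z1 z2 z3 z5) (crossratio z1 z2 z3 z4) <->
  dependent3 (qsub (chart z3 z2) (chart z3 z1)) (qsub (chart z3 z4) (chart z3 z1))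
             (qsub (chart z3 z5) (chart z3 z1)).
Proof.
move=> d12 d13 d23 d42 d43 d52 d53.
have [l [r [one Q]]] := crossratio_factor d12 d13 d23.
have [l0 r0] := qmul_eq1_neq0 one.
by rewrite qcommute_dependent3 -one !Q // dependent3_mulR // dependent3_mulL.
Qed.

End Quaternions.

Theorem mainTheorem5 (R : realType) (z1 z2 z3 z4 z5 : hquat R) :
  distinct5 z1 z2 z3 z4 z5 ->
  (on_common_2sphere_or_2plane z1 z2 z3 z4 z5 <->
   qmul (crossratio z1 z2 z3 z4) (crossratio z1 z2 z3 z5)
   = qmul (crossratio z1 z2 z3 z5) (crossratio z1 z2 z3 z4)).
Proof.
case=> d12 d13 d14 d15 [d23 d24 d25 [d34 d35 d45]].
apply: iff_trans (on_2sphere_or_2plane_chart d13 d23 (nesym d34) (nesym d35)) _.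
apply: iff_trans (affine_plane4_dependent3 _ _ _ _) (iff_sym _).
by apply: crossratio_commute_dependent3 => //; exact: nesym.
Qed.
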